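(* Let $G$ be a (not necessarily connected) graph on $n\ge1$ vertices with adjacency matrix $A$ and let $m\ge1$. Then there exist $\mu\in\mathbb{R}$, $f\in\mathbb{R}^m$, $g\in\mathbb{R}^n$ such that, with $\alpha=-2m$, \[ (J_m+\alpha I)f=\tfrac{\mu}{2}\mathbf 1,\quad (A-J_n-\alpha I)g=-\tfrac{\mu}{2}\mathbf 1,\quad \langle f,f\rangle+\langle g,g\rangle=1,\quad \langle\mathbf 1,f\rangle+\langle\mathbf 1,g\rangle=0, \] if and only if $-2m$ is an eigenvalue of $A$.
   Context: $J_k$ is the $k\times k$ all-ones matrix, $\mathbf 1$ the all-ones vector of the appropriate size, $I$ the identity. *)

From HB Require Import structures.
From mathcomp Require Import all_boot all_order all_algebra.
From mathcomp Require Import reals.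
Set Implicit Arguments. Unset Strict Implicit. Unset Printing Implicit Defensive.
Import Order.TTheory GRing.Theory Num.Theory.
Local Open Scope ring_scope.

Definition simple_graph (n : nat) (e : rel 'I_n) : Prop :=
  symmetric e /\ irreflexive e.

Definition adjmx (R : nzRingType) (n : nat) (e : rel 'I_n) : 'M[R]_n :=
  \matrix_(i, j) (e i j)%:R.

Definition Jmx (R : nzRingType) (k : nat) : 'M[R]_k := const_mx 1.
Definition ones (R : nzRingType) (k : nat) : 'cV[R]_k := const_mx 1.

Definition dotc (R : nzRingType) (k : nat) (u v : 'cV[R]_k) : R :=
  \sum_(i < k) u i 0 * v i 0.

From HB Require Import structures.
From mathcomp Require Import all_boot all_order all_algebra.
From mathcomp Require Import reals.
From mathcomp Require Import ring lra.
Import Order.TTheory GRing.Theory Num.Theory.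
Local Open Scope ring_scope.

(** Pairing the first equation with [1] forces [<1,f> = -mu/2] (this is where
    [alpha = -2m] enters), so the zero-sum condition gives [<1,g> = mu/2], and
    the second equation collapses to [A g = alpha g]; the unit-norm condition
    rules out [g = 0].  Conversely, an eigenvector [g0] of [A] for [alpha] with
    [s = <1,g0>] yields the solution [g = t g0], [f = -(t s/m) 1], [mu = 2 t s],
    with [t] chosen to normalise. *)

Section InnerProduct.
Variable R : comNzRingType.

Lemma dotcDr k (u v w : 'cV[R]_k) : dotc u (v + w) = dotc u v + dotc u w.
Proof. by rewrite /dotc -big_split; apply: eq_bigr => i _; rewrite !mxE mulrDr. Qed.

Lemma dotcZr k a (u v : 'cV[R]_k) : dotc u (a *: v) = a * dotc u v.
Proof. by rewrite /dotc mulr_sumr; apply: eq_bigr => i _; rewrite !mxE mulrCA. Qed.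

Lemma dotcZl k a (u v : 'cV[R]_k) : dotc (a *: u) v = a * dotc u v.
Proof. by rewrite /dotc mulr_sumr; apply: eq_bigr => i _; rewrite !mxE mulrA. Qed.

Lemma dotc0r k (u : 'cV[R]_k) : dotc u 0 = 0.
Proof. by rewrite /dotc big1 // => i _; rewrite mxE mulr0. Qed.

Lemma dotc_ones k : dotc (ones R k) (ones R k) = k%:R.
Proof.
by rewrite /dotc (eq_bigr (fun=> 1)) ?sumr_const ?card_ord // => i _; rewrite !mxE mulr1.
Qed.

Lemma mul_Jmx k (v : 'cV[R]_k) : Jmx R k *m v = dotc (ones R k) v *: ones R k.
Proof.
apply/matrixP => i j; rewrite (ord1 j) !mxE mulr1.
by apply: eq_bigr => l _; rewrite !mxE.
Qed.

End InnerProduct.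

Lemma dotc_gt0 (R : realDomainType) k (u : 'cV[R]_k) : u != 0 -> 0 < dotc u u.
Proof.
move=> u_neq0; have sq_ge0 (i : 'I_k) : true -> 0 <= u i 0 * u i 0.
  by rewrite -expr2 sqr_ge0.
rewrite lt_def sumr_ge0 // andbT; apply: contra u_neq0 => /eqP /(psumr_eq0P sq_ge0) u0.
apply/eqP/matrixP => i j; rewrite (ord1 j) mxE.
by move/eqP: (u0 i isT); rewrite mulf_eq0 orbb => /eqP.
Qed.

Lemma eigenvalue_colP (F : fieldType) n (A : 'M[F]_n) a :
  reflect (exists2 v : 'cV_n, A^T *m v = a *: v & v != 0) (eigenvalue A a).
Proof.
apply: (iffP eigenvalueP) => -[v Av v_neq0]; exists v^T; rewrite ?trmx_eq0 //.
- by rewrite -trmx_mul Av linearZ.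
- by rewrite -[A]trmxK -trmx_mul Av linearZ.
Qed.

Lemma adjmx_sym (R : nzRingType) n (e : rel 'I_n) :
  symmetric e -> (adjmx R e)^T = adjmx R e.
Proof. by move=> e_sym; apply/matrixP => i j; rewrite !mxE e_sym. Qed.

Section EigenSystem.
Variables (R : rcfType) (n m : nat) (A : 'M[R]_n).
Hypothesis m_gt0 : (0 < m)%N.
Local Notation alpha := (- (2 * m)%:R : R).

Definition normalized_solution (mu : R) (f : 'cV[R]_m) (g : 'cV[R]_n) : Prop :=
  [/\ (Jmx R m + alpha%:M) *m f = (mu / 2) *: ones R m,
      (A - Jmx R n - alpha%:M) *m g = - (mu / 2) *: ones R n,
      dotc f f + dotc g g = 1
    & dotc (ones R m) f + dotc (ones R n) g = 0].

Let m_neq0 : (m%:R : R) != 0. Proof. by rewrite pnatr_eq0 -lt0n. Qed.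

Lemma solution_sum_f mu (f : 'cV[R]_m) :
  (Jmx R m + alpha%:M) *m f = (mu / 2) *: ones R m -> dotc (ones R m) f = - (mu / 2).
Proof.
rewrite mulmxDl mul_Jmx mul_scalar_mx => /(congr1 (dotc (ones R m))).
rewrite dotcDr !dotcZr dotc_ones natrM => E.
by apply: (mulIf m_neq0); nra.
Qed.

Lemma solution_eigenvector mu f g :
  normalized_solution mu f g -> A *m g = alpha *: g.
Proof.
case=> /solution_sum_f sum_f eq_g _ sum0.
have sum_g : dotc (ones R n) g = mu / 2 by lra.
move: eq_g; rewrite !mulmxBl mul_Jmx mul_scalar_mx sum_g addrAC.
by move/eqP; rewrite subr_eq -scalerDl addNr scale0r subr_eq0 => /eqP.
Qed.

Lemma solution_neq0 mu f g : normalized_solution mu f g -> g != 0.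
Proof.
case=> eq_f _ norm1 sum0; apply/eqP => g_eq0.
move: sum0 norm1; rewrite g_eq0 dotc0r !addr0 => sum_f0.
have mu0 : mu / 2 = 0 by rewrite -[mu / 2]opprK -(solution_sum_f _ _ eq_f) sum_f0 oppr0.
have alpha_neq0 : alpha != 0 by rewrite oppr_eq0 pnatr_eq0 muln_eq0 /= -lt0n.
move: eq_f; rewrite mulmxDl mul_Jmx mul_scalar_mx sum_f0 mu0 !scale0r add0r.
move/eqP; rewrite scaler_eq0 (negbTE alpha_neq0) /= => /eqP ->.
by rewrite !dotc0r addr0 => /eqP; rewrite eq_sym oner_eq0.
Qed.

Lemma eigenvector_solution (g0 : 'cV[R]_n) :
  A *m g0 = alpha *: g0 -> g0 != 0 ->
  exists mu f g, normalized_solution mu f g.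
Proof.
move=> Ag0 g0_neq0; set s := dotc (ones R n) g0.
pose N := s ^+ 2 / m%:R + dotc g0 g0.
have N_gt0 : 0 < N by rewrite ltr_wpDl ?dotc_gt0 // divr_ge0 ?sqr_ge0 ?ler0n.
pose t := (Num.sqrt N)^-1.
have tN : t ^+ 2 * N = 1 by rewrite exprVn sqr_sqrtr ?ltW // mulVf ?gt_eqF.
exists (2 * t * s), (- (t * s / m%:R) *: ones R m), (t *: g0); split.
- rewrite mulmxDl mul_Jmx mul_scalar_mx dotcZr dotc_ones scalerA -scalerDl.
  by congr (_ *: _); rewrite natrM; field.
- rewrite !mulmxBl mul_Jmx mul_scalar_mx -scalemxAr Ag0 dotcZr -/s !scalerA.
  rewrite [t * _]mulrC addrAC subrr add0r -scaleNr.
  by congr (_ *: _); field.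
- by rewrite !dotcZl !dotcZr dotc_ones -[RHS]tN /N; field.
- by rewrite !dotcZr dotc_ones -/s; field.
Qed.

End EigenSystem.

Theorem lemma3p5 (R : realType) (n m : nat) (e : rel 'I_n) :
  simple_graph e -> (0 < n)%N -> (0 < m)%N ->
  let A : 'M[R]_n := adjmx R e in
  let alpha : R := - (2 * m)%:R in
  (exists (mu : R) (f : 'cV[R]_m) (g : 'cV[R]_n),
      [/\ (Jmx R m + alpha%:M) *m f = (mu / 2) *: ones R m,
          (A - Jmx R n - alpha%:M) *m g = - (mu / 2) *: ones R n,
          dotc f f + dotc g g = 1
        & dotc (ones R m) f + dotc (ones R n) g = 0])
  <-> eigenvalue A alpha.
Proof.
move=> [e_sym _] _ m_gt0 A alpha; split.
- move=> [mu [f [g sol]]]; apply/eigenvalue_colP; rewrite adjmx_sym //.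
  by exists g; [exact: solution_eigenvector sol | exact: solution_neq0 sol].
- move/eigenvalue_colP; rewrite adjmx_sym // => -[g Ag g_neq0].
  exact: eigenvector_solution Ag g_neq0.
Qed.
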